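(* Let $F$ be a recurrent set and let $X\subset F$ be a bifix code of finite $F$-degree $d$. Then the set of nonempty proper suffixes of words of $X$ is a disjoint union of $d-1$ $F$-maximal prefix codes.
   Context: $A$ is a finite alphabet. $F\subset A^*$ is recurrent if it is nonempty, closed under factors, and for all $u,w\in F$ there is $v\in F$ with $uvw\in F$. A prefix code is a set of nonempty words none of which is a proper prefix of another; a bifix code is also suffix (no element a proper suffix of another). A prefix code $Y\subset F$ is $F$-maximal if it is not properly contained in any prefix code contained in $F$. A parse of $w$ with respect to $X$ is a triple $(v,x,u)$ with $w=vxu$, $v$ having no suffix in $X$, $x\in X^*$, $u$ having no prefix in $X$; $\delta_X(w)$ is their number and $d_F(X)=\max_{w\in F}\delta_X(w)$. *)

From mathcomp Require Import all_boot.
Set Implicit Arguments. Unset Strict Implicit. Unset Printing Implicit Defensive.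

Section Words.
Variable A : finType.
Implicit Types (F X Y : pred (seq A)) (u v w x : seq A).

Definition recurrent F : Prop :=
  [/\ exists w, F w,
      (forall u v w, F (u ++ v ++ w) -> F v)
    & (forall u w, F u -> F w -> exists v, F v /\ F (u ++ v ++ w))].

Definition prefix_code X : Prop :=
  (forall x, X x -> x != [::]) /\
  (forall x t, X x -> X (x ++ t) -> t != [::] -> False).

Definition suffix_code X : Prop :=
  (forall x, X x -> x != [::]) /\
  (forall x t, X x -> X (t ++ x) -> t != [::] -> False).

Definition bifix_code X : Prop := prefix_code X /\ suffix_code X.

Definition subset_of X F : Prop := forall x, X x -> F x.

Definition F_maximal_prefix_code F Y : Prop :=
  [/\ prefix_code Y, subset_of Y F &
      forall Y', prefix_code Y' -> subset_of Y' F -> subset_of Y Y' -> Y' =i Y].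

Fixpoint starb_aux X (n : nat) w : bool :=
  match n with
  | 0 => w == [::]
  | n'.+1 => (w == [::]) ||
      has (fun k => X (take k.+1 w) && starb_aux X n' (drop k.+1 w)) (iota 0 (size w))
  end.
Definition starb X w : bool := starb_aux X (size w) w.

Definition no_suffix_in X v : bool :=
  ~~ has (fun k => X (drop k v)) (iota 0 (size v).+1).
Definition no_prefix_in X u : bool :=
  ~~ has (fun k => X (take k u)) (iota 0 (size u).+1).

(* A parse (v, x, u) of w with w = v x u is determined by the cut points
   i = |v| <= j = |v x|. *)
Definition parseb X w (i j : nat) : bool :=
  [&& i <= j, j <= size w,
      no_suffix_in X (take i w),
      starb X (drop i (take j w)) &
      no_prefix_in X (drop j w)].

Definition delta X w : nat :=
  #|[set ij : 'I_(size w).+1 * 'I_(size w).+1 | parseb X w ij.1 ij.2]|.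

Definition F_degree F X (d : nat) : Prop :=
  (exists2 w, F w & delta X w = d) /\ (forall w, F w -> delta X w <= d).

Definition proper_suffixes X (s : seq A) : Prop :=
  s != [::] /\ exists x t, X x /\ t != [::] /\ x = t ++ s.

End Words.

From mathcomp Require Import all_boot boolp zify.
Set Implicit Arguments. Unset Strict Implicit. Unset Printing Implicit Defensive.

(* Since X is a prefix code, a parse (v, x, u) of w is determined by v, and it
   exists iff v has no suffix in X; since X is a suffix code, it is likewise
   determined by u. So delta_X(w) counts the prefixes of w with no suffix in X,
   a count that grows along right extensions, by one exactly at such prefixes,
   and also the suffixes of w with no prefix in X, which grows along left
   extensions.
   The layer P_k (2 <= k <= d) collects the nonempty proper suffixes s of words
   of X with delta_X(s) = k; they have no suffix in X, so s < s t in the prefix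
   order would force delta_X(s t) > k, and P_k is a prefix code. For
   F-maximality, extend w in F to w v in F of degree d and cut w v at the prefix
   p where the count reaches k; choose r in F of degree d with r p in F. As
   delta_X(r p) <= d, r p has a suffix in X, which must be t p with t nonempty:
   p lies in P_k and is comparable with w. *)

Lemma card_pairs_sum_fst n (P : nat -> nat -> bool) :
  #|[set ij : 'I_n.+1 * 'I_n.+1 | P ij.1 ij.2]| =
  \sum_(i < n.+1) #|[set j : 'I_n.+1 | P i j]|.
Proof.
rewrite -sum1_card (eq_bigl (fun ij : 'I_n.+1 * 'I_n.+1 => true && P ij.1 ij.2));
  last by move=> ij; rewrite inE.
rewrite -(pair_big_dep xpredT (fun i j : 'I_n.+1 => P i j) (fun _ _ => 1)).
by apply: eq_bigr => i _; rewrite -sum1_card; apply: eq_bigl => j; rewrite inE.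
Qed.

Lemma card_pairs_sum_snd n (P : nat -> nat -> bool) :
  #|[set ij : 'I_n.+1 * 'I_n.+1 | P ij.1 ij.2]| =
  \sum_(j < n.+1) #|[set i : 'I_n.+1 | P i j]|.
Proof.
rewrite card_pairs_sum_fst; under eq_bigr => i _ do rewrite -sum1_card big_mkcond.
rewrite exchange_big /=; apply: eq_bigr => j _.
by rewrite -big_mkcond -sum1_card; apply: eq_bigl => i; rewrite !inE.
Qed.

Lemma card_ord_unique n (R : nat -> bool) (b : bool) :
  (forall j j', j <= n -> j' <= n -> R j -> R j' -> j = j') ->
  (b <-> exists2 j, j <= n & R j) ->
  #|[set j : 'I_n.+1 | R j]| = b.
Proof.
case: b => uniqR bE.
  have [j jn Rj] := proj1 bE isT.
  suff -> : [set j : 'I_n.+1 | R j] = [set Ordinal (jn : j < n.+1)] by rewrite cards1.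
  apply/setP => k; rewrite !inE; apply/idP/eqP => [Rk|->]; last exact: Rj.
  by apply: val_inj; apply: uniqR => //; exact: (ltn_ord k).
apply/eqP; rewrite cards_eq0; apply/eqP/setP => k; rewrite !inE.
by apply/negbTE/negP => Rk; have // := proj2 bE (ex_intro2 _ _ (k : nat) (ltn_ord k) Rk).
Qed.

Lemma sum_ord_count n (Q : pred nat) :
  \sum_(i < n) (Q i : nat) = count Q (iota 0 n).
Proof.
rewrite -sum1_count -(big_mkord xpredT (fun i => (Q i : nat))) /index_iota subn0.
by rewrite [RHS]big_mkcond; apply: congr_big => // i _; case: (Q i).
Qed.

Lemma cat_eq_cat (T : Type) (a b c d : seq T) : a ++ b = c ++ d ->
  (exists t, c = a ++ t /\ b = t ++ d) \/ (exists t, a = c ++ t /\ d = t ++ b).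
Proof.
elim: a c => [|x a IH] [|y c] /=.
- by move=> ->; left; exists [::].
- by move=> ->; left; exists (y :: c).
- by move=> <-; right; exists (x :: a).
- by case=> -> /IH [[t [-> ->]]|[t [-> ->]]]; [left|right]; exists t.
Qed.

Section Codes.
Variable A : finType.
Implicit Types (X Y : pred (seq A)) (s t v y : seq A).

Lemma prefix_code_nil X : prefix_code X -> ~~ X [::].
Proof. by case=> nonnil _; apply/negP => /nonnil. Qed.

Lemma suffix_code_nil X : suffix_code X -> ~~ X [::].
Proof. by case=> nonnil _; apply/negP => /nonnil. Qed.

Lemma prefix_code_cat_eq Y y s v t :
  prefix_code Y -> Y y -> Y s -> y ++ v = s ++ t -> y = s.
Proof.
move=> [_ pcY] Yy Ys /cat_eq_cat [[[|a r] [Es _]]|[[|a r] [Ey _]]].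
- by rewrite Es cats0.
- by case: (pcY y (a :: r)); rewrite -?Es.
- by rewrite Ey cats0.
- by case: (pcY s (a :: r)); rewrite -?Ey.
Qed.

Lemma suffix_code_cat_eq Y y s v t :
  suffix_code Y -> Y y -> Y s -> v ++ y = t ++ s -> y = s.
Proof.
move=> [_ scY] Yy Ys /cat_eq_cat [[[|a r] [_ Ey]]|[[|a r] [_ Es]]].
- by rewrite Ey.
- by case: (scY s (a :: r)); rewrite -?Ey.
- by rewrite Es.
- by case: (scY y (a :: r)); rewrite -?Es.
Qed.

Lemma suffix_code_no_suffix_in X t s :
  suffix_code X -> X (t ++ s) -> t != [::] -> no_suffix_in X s.
Proof.
move=> [_ scX] Xts tn; apply/hasPn => k _; apply/negP => Xk.
by apply: (scX _ (t ++ take k s) Xk); rewrite -?catA ?cat_take_drop //; case: t Xts tn.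
Qed.

End Codes.

Section Factorization.
Variables (A : finType) (X : pred (seq A)).
Implicit Types (p q u v w : seq A).

Lemma no_prefix_inP u :
  reflect (forall p q, u = p ++ q -> ~~ X p) (no_prefix_in X u).
Proof.
apply: (iffP hasPn) => [npu p q Eu|npu k _].
  by have := npu (size p); rewrite Eu take_size_cat // mem_iota size_cat ltnS leq_addr; apply.
by apply: (npu _ (drop k u)); rewrite cat_take_drop.
Qed.

Lemma no_suffix_inP v :
  reflect (forall p q, v = p ++ q -> ~~ X q) (no_suffix_in X v).
Proof.
apply: (iffP hasPn) => [nsv p q Ev|nsv k _].
  by have := nsv (size p); rewrite Ev drop_size_cat // mem_iota size_cat ltnS leq_addr; apply.
by apply: (nsv (take k v)); rewrite cat_take_drop.
Qed.

Hypothesis X_nil : ~~ X [::].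

Lemma size_X_gt0 x : X x -> 0 < size x.
Proof. by case: x => // Xnil; case/negP: X_nil. Qed.

Lemma starb_auxP n w : size w <= n ->
  reflect (exists2 ys, all X ys & flatten ys = w) (starb_aux X n w).
Proof.
elim: n w => [|n IH] w /=.
  by rewrite leqn0 => /nilP ->; apply: ReflectT; exists [::].
move=> sz_w; apply: (iffP orP) => [[/eqP ->|/hasP [k _ /andP [Xk /IH starw]]]|].
- by exists [::].
- have [|ys Xys Eys] := starw.
    by rewrite size_drop leq_subLR (leq_trans sz_w) // addSn ltnS leq_addl.
  by exists (take k.+1 w :: ys); rewrite /= ?Xk ?Eys ?cat_take_drop.
case=> [[|y ys]] /=; first by left; apply/eqP.
case/andP=> Xy Xys Ew; right; apply/hasP; exists (size y).-1.
  by rewrite -Ew mem_iota size_cat prednK ?leq_addr ?size_X_gt0.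
rewrite prednK ?size_X_gt0 // -Ew take_size_cat // drop_size_cat // Xy /=.
apply/IH; last by exists ys.
move: sz_w; rewrite -Ew size_cat -(prednK (size_X_gt0 Xy)) addSn ltnS.
by apply: leq_trans; rewrite leq_addl.
Qed.

Lemma starbP w : reflect (exists2 ys, all X ys & flatten ys = w) (starb X w).
Proof. exact: starb_auxP. Qed.

Lemma factor_prefix w :
  exists ys u, [/\ all X ys, no_prefix_in X u & w = flatten ys ++ u].
Proof.
have [n] := ubnP (size w); elim: n w => // n IH w /ltnSE sz_w.
case: (boolP (no_prefix_in X w)) => [npw|/negbNE/hasP [k _ Xk]]; first by exists [::], w.
have [|ys [u [Xys npu Ew]]] := IH (drop k w).
  by have := size_X_gt0 Xk; rewrite size_drop size_take; case: (ltnP k (size w)); lia.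
by exists (take k w :: ys), u; rewrite /= Xk -catA -Ew cat_take_drop.
Qed.

Lemma factor_suffix w :
  exists ys v, [/\ all X ys, no_suffix_in X v & w = v ++ flatten ys].
Proof.
have [n] := ubnP (size w); elim: n w => // n IH w /ltnSE sz_w.
case: (boolP (no_suffix_in X w)) => [nsw|/negbNE/hasP [k]].
  by exists [::], w; rewrite cats0.
rewrite mem_iota /= ltnS => k_le Xk.
have k_lt : k < size w.
  by rewrite ltn_neqAle k_le andbT; apply: contraNneq X_nil => k_eq; rewrite -(drop_size w) -k_eq.
have [|ys [v [Xys nsv Ew]]] := IH (take k w); first by rewrite size_take k_lt; lia.
by exists (rcons ys (drop k w)), v; rewrite all_rcons Xk flatten_rcons catA -Ew cat_take_drop.
Qed.

End Factorization.

Definition delta_pref (A : finType) (X : pred (seq A)) (w : seq A) :=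
  count (fun i => no_suffix_in X (take i w)) (iota 0 (size w).+1).

Definition delta_suff (A : finType) (X : pred (seq A)) (w : seq A) :=
  count (fun j => no_prefix_in X (drop j w)) (iota 0 (size w).+1).

Section PrefixCode.
Variables (A : finType) (X : pred (seq A)).
Hypothesis pcX : prefix_code X.
Let X_nil := prefix_code_nil pcX.

Lemma flatten_prefix_unique (ys ys' : seq (seq A)) (u u' : seq A) :
  all X ys -> all X ys' -> no_prefix_in X u -> no_prefix_in X u' ->
  flatten ys ++ u = flatten ys' ++ u' -> flatten ys = flatten ys'.
Proof.
elim: ys ys' u u' => [|y ys IH] [|y' ys'] u u' //=.
- move=> _ /andP [Xy' _] /no_prefix_inP npu _ Eu; rewrite -catA in Eu.
  by case/negP: (npu _ _ Eu).
- move=> /andP [Xy _] _ _ /no_prefix_inP npu' Eu; rewrite -catA in Eu.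
  by case/negP: (npu' _ _ (esym Eu)).
move=> /andP [Xy Xys] /andP [Xy' Xys'] npu npu'; rewrite -!catA => E.
have Ey := prefix_code_cat_eq pcX Xy Xy' E; subst y'.
by move/eqP: E; rewrite eqseq_cat // => /andP [_ /eqP /IH ->].
Qed.

Lemma star_prefix_cut_unique (y : seq A) m m' : m <= size y -> m' <= size y ->
  starb X (take m y) -> no_prefix_in X (drop m y) ->
  starb X (take m' y) -> no_prefix_in X (drop m' y) -> m = m'.
Proof.
move=> my m'y /(starbP X_nil) [ys Xys Eys] npm /(starbP X_nil) [ys' Xys' Eys'] npm'.
have := flatten_prefix_unique Xys Xys' npm npm'.
by rewrite Eys Eys' !cat_take_drop => /(_ erefl) /(congr1 size); rewrite !size_takel.
Qed.

Lemma card_parses_from (w : seq A) i : i <= size w ->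
  #|[set j : 'I_(size w).+1 | parseb X w i j]| = no_suffix_in X (take i w).
Proof.
move=> iw; apply: card_ord_unique => [j j' jw j'w|].
  case/and5P=> ij _ _ starj npj /and5P [ij' _ _ starj' npj'].
  suff : j - i = j' - i by move/(congr1 (addn^~ i)); rewrite !subnK.
  apply: (star_prefix_cut_unique (y := drop i w));
    by rewrite ?size_drop ?leq_sub2r // ?take_drop ?drop_drop ?subnK.
split=> [nsi|[j _ /and5P [] //]].
have [ys [u [Xys npu Ew]]] := factor_prefix X_nil (drop i w).
have jw : size (flatten ys) + i <= size w.
  by rewrite -(subnK iw) -size_drop Ew size_cat leq_add2r leq_addr.
exists (size (flatten ys) + i) => //; apply/and5P; split=> //; first by rewrite leq_addl.
  by rewrite -take_drop Ew take_size_cat //; apply/(starbP X_nil); exists ys.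
by rewrite -drop_drop Ew drop_size_cat.
Qed.

Lemma delta_prefE (w : seq A) : delta X w = delta_pref X w.
Proof.
rewrite /delta card_pairs_sum_fst /delta_pref -sum_ord_count.
by apply: eq_bigr => i _; rewrite card_parses_from //; exact: (ltn_ord i).
Qed.

End PrefixCode.

Section SuffixCode.
Variables (A : finType) (X : pred (seq A)).
Hypothesis scX : suffix_code X.
Let X_nil := suffix_code_nil scX.

Lemma flatten_suffix_unique (ys ys' : seq (seq A)) (v v' : seq A) :
  all X ys -> all X ys' -> no_suffix_in X v -> no_suffix_in X v' ->
  v ++ flatten ys = v' ++ flatten ys' -> flatten ys = flatten ys'.
Proof.
elim/last_ind: ys ys' v v' => [|ys y IH] ys' v v'; case/lastP: ys' => [|ys' y'] //=;
  rewrite ?flatten_rcons ?all_rcons ?cats0.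
- move=> _ /andP [Xy' _] /no_suffix_inP nsv _ Ev; rewrite catA in Ev.
  by case/negP: (nsv _ _ Ev).
- move=> /andP [Xy _] _ _ /no_suffix_inP nsv' Ev; rewrite catA in Ev.
  by case/negP: (nsv' _ _ (esym Ev)).
move=> /andP [Xy Xys] /andP [Xy' Xys'] nsv nsv'; rewrite !catA => E.
have Ey := suffix_code_cat_eq scX Xy Xy' E; subst y'.
move/eqP: (E); rewrite eqseq_cat; last by move/(congr1 size): E; rewrite !size_cat => /addIn.
by case/andP=> /eqP /(IH _ _ _ Xys Xys' nsv nsv') ->.
Qed.

Lemma star_suffix_cut_unique (y : seq A) m m' : m <= size y -> m' <= size y ->
  no_suffix_in X (take m y) -> starb X (drop m y) ->
  no_suffix_in X (take m' y) -> starb X (drop m' y) -> m = m'.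
Proof.
move=> my m'y nsm /(starbP X_nil) [ys Xys Eys] nsm' /(starbP X_nil) [ys' Xys' Eys'].
have := flatten_suffix_unique Xys Xys' nsm nsm'.
rewrite Eys Eys' !cat_take_drop => /(_ erefl) /(congr1 size); rewrite !size_drop => E.
by rewrite -(subKn my) -(subKn m'y) E.
Qed.

Lemma card_parses_to (w : seq A) j : j <= size w ->
  #|[set i : 'I_(size w).+1 | parseb X w i j]| = no_prefix_in X (drop j w).
Proof.
move=> jw; apply: (card_ord_unique (R := parseb X w ^~ j)) => [i i' iw i'w|].
  case/and5P=> ij _ nsi stari _ /and5P [i'j _ nsi' stari' _].
  by apply: (star_suffix_cut_unique (y := take j w)); rewrite ?size_takel ?take_takel.
split=> [npj|[i _ /and5P [] //]].
have [ys [v [Xys nsv Ew]]] := factor_suffix X_nil (take j w).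
have vj : size v <= j by rewrite -(size_takel jw) Ew size_cat leq_addr.
exists (size v); first exact: leq_trans vj jw.
apply/and5P; split=> //; first by rewrite -(take_takel _ vj) Ew take_size_cat.
by rewrite Ew drop_size_cat //; apply/(starbP X_nil); exists ys.
Qed.

Lemma delta_suffE (w : seq A) : delta X w = delta_suff X w.
Proof.
rewrite /delta card_pairs_sum_snd /delta_suff -sum_ord_count.
by apply: eq_bigr => j _; rewrite card_parses_to //; exact: (ltn_ord j).
Qed.

End SuffixCode.

Section DeltaCounts.
Variables (A : finType) (X : pred (seq A)).
Implicit Types (p q u z U : seq A).

Lemma delta_pref_nil : delta_pref X [::] = ~~ X [::].
Proof. by rewrite /delta_pref /no_suffix_in /= orbF addn0. Qed.

Lemma delta_pref_cat p q : delta_pref X (p ++ q) = delta_pref X p +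
  count (fun i => no_suffix_in X (take i (p ++ q))) (iota (size p).+1 (size q)).
Proof.
rewrite /delta_pref size_cat -addSn iotaD count_cat add0n; congr (_ + _).
by apply: eq_in_count => i; rewrite mem_iota ltnS => /andP [_ ip]; rewrite takel_cat.
Qed.

Lemma delta_pref_catr p q : delta_pref X p <= delta_pref X (p ++ q).
Proof. by rewrite delta_pref_cat leq_addr. Qed.

Lemma delta_pref_rcons p a :
  delta_pref X (rcons p a) = delta_pref X p + no_suffix_in X (rcons p a).
Proof. by rewrite -cats1 delta_pref_cat /= take_oversize ?addn0 // size_cat addn1. Qed.

Lemma delta_pref_cat_ge p q : q != [::] ->
  delta_pref X p + no_suffix_in X (p ++ q) <= delta_pref X (p ++ q).
Proof.
by case/lastP: q => // q a _; rewrite -rcons_cat delta_pref_rcons leq_add2r delta_pref_catr.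
Qed.

Lemma delta_suff_catl u z : delta_suff X z <= delta_suff X (u ++ z).
Proof.
rewrite /delta_suff size_cat -addnS iotaD count_cat add0n.
have -> : iota (size u) (size z).+1 = map (addn (size u)) (iota 0 (size z).+1).
  by rewrite -iotaDl addn0.
rewrite count_map (@eq_count _ (preim _ _) (fun j => no_prefix_in X (drop j z))) ?leq_addl //.
by move=> j /=; rewrite addnC -drop_drop drop_size_cat.
Qed.

Lemma delta_pref_ivt U k : 0 < k <= delta_pref X U ->
  exists p q, [/\ U = p ++ q, delta_pref X p = k & no_suffix_in X p].
Proof.
elim/last_ind: U => [|U a IH] /andP [k_gt0 k_le].
  exists [::], [::]; move: k_le; rewrite delta_pref_nil /no_suffix_in /= orbF.
  by case: (X [::]) k_gt0 => //=; case: k => [|[]].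
have [k_leU|k_gtU] := leqP k (delta_pref X U).
  have [p [q [-> ? ?]]] := IH (introT andP (conj k_gt0 k_leU)).
  by exists p, (rcons q a); rewrite rcons_cat.
move: k_le; rewrite delta_pref_rcons.
case: (boolP (no_suffix_in X (rcons U a))) => [nsUa|_]; last by rewrite addn0 leqNgt k_gtU.
rewrite addn1 => k_le; exists (rcons U a), [::]; rewrite cats0 delta_pref_rcons nsUa addn1.
by split=> //; apply/eqP; rewrite eqn_leq k_le k_gtU.
Qed.

End DeltaCounts.

Section SuffixLayers.
Variables (A : finType) (F X : pred (seq A)) (d : nat).
Hypotheses (recF : recurrent F) (XF : subset_of X F) (bifX : bifix_code X) (degX : F_degree F X d).
Let pcX := proj1 bifX.
Let scX := proj2 bifX.

(* Being a proper suffix is undecidable for an arbitrary predicate X, hence the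
   classical boolean reflection. *)
Definition suffix_layer k : pred (seq A) :=
  fun s => `[< proper_suffixes X s >] && (delta_pref X s == k).

Lemma delta_pref_le_degree w : F w -> delta_pref X w <= d.
Proof. by move=> Fw; rewrite -(delta_prefE pcX) degX.2. Qed.

Lemma proper_suffixes_in_F s : proper_suffixes X s -> F s.
Proof.
case: recF => _ factF _ [_ [x [t [Xx [_ Ex]]]]].
by apply: (factF t s [::]); rewrite cats0 -Ex; apply: XF.
Qed.

Lemma proper_suffix_delta_pref s : proper_suffixes X s -> 1 < delta_pref X s <= d.
Proof.
move=> ps; rewrite delta_pref_le_degree ?proper_suffixes_in_F // andbT.
have [sn [x [t [Xx [tn Ex]]]]] := ps.
have := delta_pref_cat_ge X [::] sn.
by rewrite delta_pref_nil (prefix_code_nil pcX) (suffix_code_no_suffix_in scX (t := t)) -?Ex.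
Qed.

Lemma extend_to_full_degree w : F w -> exists v, F (w ++ v) /\ d <= delta_pref X (w ++ v).
Proof.
case: recF => _ _ extF; case: degX => [[z Fz dz] _] Fw.
have [v [_ Fwvz]] := extF w z Fw Fz.
exists (v ++ z); split=> //.
by rewrite -(delta_prefE pcX) -dz !(delta_suffE scX) catA delta_suff_catl.
Qed.

Lemma full_degree_left_context u : F u -> exists r, F (r ++ u) /\ d <= delta_pref X r.
Proof.
case: recF => _ _ extF; case: degX => [[z Fz dz] _] Fu.
have [v [_ Fzvu]] := extF z u Fz Fu.
exists (z ++ v); rewrite -catA -dz (delta_prefE pcX); split=> //.
exact: delta_pref_catr.
Qed.

Lemma full_degree_cat_has_suffix r p :
  d <= delta_pref X r -> F (r ++ p) -> p != [::] -> ~~ no_suffix_in X (r ++ p).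
Proof.
move=> dr Frp pn; apply/negP => nsrp.
have := leq_trans (delta_pref_cat_ge X r pn) (delta_pref_le_degree Frp).
by rewrite nsrp addn1 ltnNge dr.
Qed.

Lemma suffix_layer_prefix_code k : prefix_code (suffix_layer k).
Proof.
split=> [s /andP [/asboolP [] //]|s t /andP [_ /eqP ds]].
case/andP=> /asboolP [_ [x [t' [Xx [t'n Ex]]]]] /eqP dst tn.
have nsst : no_suffix_in X (s ++ t).
  by apply: (suffix_code_no_suffix_in scX (t := t')); rewrite -?Ex.
by have := delta_pref_cat_ge X s tn; rewrite nsst ds dst addn1 ltnn.
Qed.

Lemma suffix_layer_meets k w : F w -> 1 < k <= d ->
  exists s v t, suffix_layer k s /\ w ++ v = s ++ t.
Proof.
move=> Fw /andP [k_gt1 k_le].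
have [v [Fwv dwv]] := extend_to_full_degree Fw.
have [p [q [Ewv dp nsp]]] := delta_pref_ivt (introT andP (conj (ltnW k_gt1) (leq_trans k_le dwv))).
have [r [Frwv dr]] := full_degree_left_context Fwv.
have pn : p != [::].
  by apply: contraTneq k_gt1 => p0; rewrite -dp p0 delta_pref_nil; case: (X [::]).
have Frp : F (r ++ p).
  by case: recF => _ factF _; apply: (factF [::] _ q); rewrite /= -catA -Ewv.
have /negbNE/hasP [i _ Xi] := full_degree_cat_has_suffix dr Frp pn.
have [t [Xtp tn]] : exists t, X (t ++ p) /\ t != [::].
  move/no_suffix_inP: nsp => nsp.
  case/cat_eq_cat: (cat_take_drop i (r ++ p)) => [[t [_ Et]]|[t [_ Ep]]].
    exists t; rewrite -Et; split=> //.
    by apply: contraNneq (nsp [::] p erefl) => t0; move: Xi; rewrite Et t0.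
  by case/negP: (nsp _ _ Ep).
exists p, v, q; split=> //; apply/andP; split; last exact/eqP.
by apply/asboolP; split=> //; exists (t ++ p), t.
Qed.

Lemma suffix_layer_F_maximal k : 1 < k <= d -> F_maximal_prefix_code F (suffix_layer k).
Proof.
move=> k_range; split; first exact: suffix_layer_prefix_code.
  by move=> s /andP [/asboolP /proper_suffixes_in_F].
move=> Y pcY YF layerY y; apply/idP/idP => [Yy|/layerY //].
have [s [v [t [ls Eyv]]]] := suffix_layer_meets (YF y Yy) k_range.
by rewrite (prefix_code_cat_eq pcY Yy (layerY s ls) Eyv).
Qed.

End SuffixLayers.

Theorem mainTheorem5 (A : finType) (F X : pred (seq A)) (d : nat) :
  recurrent F -> subset_of X F -> bifix_code X -> F_degree F X d ->
  exists P : 'I_(d - 1) -> pred (seq A),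
    [/\ forall i, F_maximal_prefix_code F (P i),
        forall i j s, i != j -> P i s -> P j s -> False &
        forall s, proper_suffixes X s <-> exists i, P i s].
Proof.
move=> recF XF bifX degX.
exists (fun i => suffix_layer X i.+2); split.
- move=> i; apply: (suffix_layer_F_maximal recF XF bifX degX).
  by have := ltn_ord i; lia.
- move=> i j s /eqP ij /andP [_ /eqP di] /andP [_ /eqP dj].
  by apply: ij; apply: val_inj; apply: succn_inj; apply: succn_inj; rewrite -di -dj.
move=> s; split=> [ps|[i /andP [/asboolP //]]].
have /andP [lo hi] := proper_suffix_delta_pref recF XF bifX degX ps.
have i_lt : (delta_pref X s).-2 < d - 1 by lia.
exists (Ordinal i_lt); apply/andP; split; first exact/asboolP.
by apply/eqP => /=; lia.
Qed.
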